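(* Let $\alpha,\beta,\gamma>0$ with $\alpha<1/5-\gamma$, $\delta<1/2$, and $x_0,y\in\mathcal D(\delta)$ with $\|x_0-y\|\le\frac45r_\delta$ lying on different sides of a barrier $B_i$, $i\ge1$. Let $X$ be the snapping-out Brownian motion with $X_0=x_0$, and suppose the event $$\mathcal A:=\Big\{\mathcal E_1<\alpha r_\delta,\ \mathcal E_2>\beta r_\delta,\ \|W_t-(t/r_\delta^2)(y-x_0)\|\le\gamma r_\delta\ \forall t\le r_\delta^2\Big\}$$ occurs. Then there exists $t\le r_\delta^2$ with $s_i(L^{(i)}_t)\ne s_i(0)$.
   Context: Setting. $D\subseteq\mathbb R^2$ is the closure of a bounded open set $D_0$; $D$ is connected and simply connected, with $C^\infty$ boundary $B_0:=\partial D$, a simple closed curve. $B_1,\dots,B_m\subseteq D_0$ are $C^\infty$ simple closed curves with $B_i\cap B_j=\emptyset$ for $i\neq j$ ($0\le i,j\le m$). For each $i$, the positive side of $B_i$ is the closure of the bounded component of $\mathbb R^2\setminus B_i$, the negative side the closure of the unbounded component (points of $B_i$ lie on both sides); $\vec n_i$ is the unit normal field on $B_i$ pointing into the bounded component. Fix $\lambda_i^\pm>0$. Let $W_t$ be a standard planar Wiener process and, independently, $s_1,\dots,s_m$ independent càdlàg Markov chains on $\{-1,+1\}$, $s_i$ jumping from $-1$ to $+1$ at rate $\lambda_i^+$ and from $+1$ to $-1$ at rate $\lambda_i^-$; $s_0\equiv+1$. A snapping-out Brownian motion is a family of continuous processes $X_t\in D$, $L^{(i)}_t\ge0$ such that a.s.: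 (i) $dX_t=dW_t+\sum_{i=0}^m s_i(L^{(i)}_t)\vec n_i(X_t)\mathbf 1\{X_t\in B_i\}dL^{(i)}_t$; (ii) $L^{(i)}$ nondecreasing, $L^{(i)}_0=0$, $L^{(i)}_t=\int_0^t\mathbf 1\{X_r\in B_i\}dL^{(i)}_r$; (iii) $s_i(L^{(i)}_t)=+1$ (resp. $-1$) implies $X_t$ is on the positive (resp. negative) side of $B_i$. Here $s_i(0)$ is $+1$ if $x_0$ is on the positive side of $B_i$ and $-1$ otherwise. Parameters: $\lambda_{\max}=\max\lambda_j^\pm$; $\kappa$ maximal unsigned curvature of $B_0,\dots,B_m$; $\rho:=\sup\{r\ge0:\mathsf B(x,r')\cap\bigcup_jB_j\text{ connected }\forall r'\le r,\ x\in D\}$ ($\mathsf B$ = open ball); $r_\delta:=\delta\min\{1/\kappa,1/\lambda_{\max},\rho\}$; $\mathcal D(\delta):=\{x\in D:\|x-z\|\ge r_\delta/5\ \forall z\in\bigcup_jB_j\}$. Also $\mathcal E_1:=\inf\{t\ge0:s_i(t)\ne s_i(0)\}$ and $\mathcal E_2:=\inf\{t\ge\mathcal E_1:s_i(t)\ne s_i(\mathcal E_1)\}-\mathcal E_1$. *)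

From HB Require Import structures.
From mathcomp Require Import all_boot all_order all_algebra.
From mathcomp Require Import all_classical all_reals all_analysis.
Set Implicit Arguments. Unset Strict Implicit. Unset Printing Implicit Defensive.
Import Order.TTheory GRing.Theory Num.Theory.
Import numFieldNormedType.Exports.
Local Open Scope classical_set_scope.
Local Open Scope ring_scope.

Section Defs.
Context {R : realType}.

(** ** Plane geometry on R x R (product topology = Euclidean topology) *)
Definition pt := (R * R)%type.
Definition padd (p q : pt) : pt := (p.1 + q.1, p.2 + q.2).
Definition psub (p q : pt) : pt := (p.1 - q.1, p.2 - q.2).
Definition pscale (a : R) (p : pt) : pt := (a * p.1, a * p.2).
Definition pdot (p q : pt) : R := p.1 * q.1 + p.2 * q.2.
Definition pnorm (p : pt) : R := Num.sqrt (p.1 ^+ 2 + p.2 ^+ 2).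
Definition pdist (p q : pt) : R := pnorm (psub p q).
Definition pball (x : pt) (r : R) : set pt := [set z | pdist z x < r].
Definition ebounded (A : set pt) : Prop :=
  exists M : R, forall p, A p -> pnorm p <= M.

Definition inside (B : set pt) : set pt :=
  [set p | ~ B p /\ ebounded (connected_component (~` B) p)].
Definition outside (B : set pt) : set pt :=
  [set p | ~ B p /\ ~ ebounded (connected_component (~` B) p)].
Definition pos_side (B : set pt) : set pt := closure (inside B).
Definition neg_side (B : set pt) : set pt := closure (outside B).

Definition bdry (A : set pt) : set pt := closure A `\` interior A.

Definition smooth_fun (f : R -> R) : Prop :=
  forall (n : nat) (x : R), derivable (derive1n n f) x 1.

Definition cx (c : R -> pt) : R -> R := fun t => (c t).1.
Definition cy (c : R -> pt) : R -> R := fun t => (c t).2.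

(** c is a 1-periodic, C^oo, regular parametrization, injective on [0,1):
    its range is a C^oo simple closed curve *)
Definition smooth_simple_closed_param (c : R -> pt) : Prop :=
  [/\ smooth_fun (cx c), smooth_fun (cy c),
      (forall t, c (t + 1) = c t),
      (forall a b, 0 <= a < 1 -> 0 <= b < 1 -> c a = c b -> a = b) &
      (forall t, (derive1 (cx c) t) ^+ 2 + (derive1 (cy c) t) ^+ 2 != 0)].

Definition tangent (c : R -> pt) (t : R) : pt := (derive1 (cx c) t, derive1 (cy c) t).

Definition ucurv (c : R -> pt) (t : R) : R :=
  `| derive1 (cx c) t * derive1n 2 (cy c) t - derive1 (cy c) t * derive1n 2 (cx c) t |
  / (Num.sqrt ((derive1 (cx c) t) ^+ 2 + (derive1 (cy c) t) ^+ 2)) ^+ 3.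

Definition inward_unit_normal (c : R -> pt) (nv : pt -> pt) : Prop :=
  forall t, let z := c t in
  [/\ pnorm (nv z) = 1, pdot (nv z) (tangent c t) = 0 &
      (exists2 e0 : R, 0 < e0 &
        forall e, 0 < e < e0 -> inside (range c) (padd z (pscale e (nv z))))].

Definition Bunion (m : nat) (c : nat -> R -> pt) : set pt :=
  [set z | exists2 j, (j <= m)%N & range (c j) z].

Definition unit_itv : set R := [set t | 0 <= t <= 1].
Definition unit_sq : set (R * R) := [set q | 0 <= q.1 <= 1 /\ 0 <= q.2 <= 1].
Definition simply_connected (D : set pt) : Prop :=
  (forall x y, D x -> D y -> exists p : R -> pt,
      [/\ {within unit_itv, continuous p}, (forall t, unit_itv t -> D (p t)),
          p 0 = x & p 1 = y]) /\
  (forall p : R -> pt, {within unit_itv, continuous p} ->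
      (forall t, unit_itv t -> D (p t)) -> p 0 = p 1 ->
      exists H : R * R -> pt,
      [/\ {within unit_sq, continuous H},
          (forall q, unit_sq q -> D (H q)),
          (forall t, unit_itv t -> H (t, 0) = p t /\ H (t, 1) = p 0) &
          (forall u, unit_itv u -> H (0, u) = p 0 /\ H (1, u) = p 0)]).

Definition kappa (m : nat) (c : nat -> R -> pt) : R :=
  sup [set k | exists j t, (j <= m)%N /\ k = ucurv (c j) t].
Definition lambda_max (m : nat) (lp lm : nat -> R) : R :=
  \big[Num.max/0]_(1 <= j < m.+1) Num.max (lp j) (lm j).
Definition rho (D : set pt) (m : nat) (c : nat -> R -> pt) : R :=
  sup [set r | 0 <= r /\ forall r' x, r' <= r -> D x ->
                 connected (pball x r' `&` Bunion m c)].
Definition r_delta (delta kap lmax rh : R) : R :=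
  delta * Num.min (Num.min kap^-1 lmax^-1) rh.
Definition Ddelta (D : set pt) (m : nat) (c : nat -> R -> pt) (r : R) : set pt :=
  [set x | D x /\ forall z, Bunion m c z -> r / 5 <= pdist x z].

Definition cadlag (f : R -> R) : Prop :=
  forall t, 0 <= t ->
    f @ at_right t --> f t /\ (0 < t -> cvg (f @ at_left t)).

Definition nonneg_time : set R := [set t | 0 <= t].

(** E_1 and E_2 (extended-real valued; inf of the empty set = +oo) *)
Definition E1 (s : R -> R) : \bar R :=
  ereal_inf [set t%:E | t in [set t | 0 <= t /\ s t != s 0]].
Definition E2 (s : R -> R) : \bar R :=
  let e := fine (E1 s) in
  let I := ereal_inf [set t%:E | t in [set t | e <= t /\ s t != s e]] in
  (I - E1 s)%E.

Definition stieltjes (f : R -> R) : {measure set (measurableTypeR R) -> \bar R} :=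
  match pselect (nondecreasing f /\ right_continuous f) with
  | left h => lebesgue_stieltjes_measure
                (HB.pack f (isCumulative.Build R _ R f (proj1 h) (proj2 h)))
  | right _ => mzero
  end.

Definition ext0 (L : R -> R) : R -> R := fun t => L (Num.max t 0).

Definition LSint (L : R -> R) (g : R -> R) (t : R) : R :=
  Rintegral (stieltjes (ext0 L)) `[0, t] g.
Definition LSintv (L : R -> R) (g : R -> pt) (t : R) : pt :=
  (LSint L (fun r => (g r).1) t, LSint L (fun r => (g r).2) t).

Definition ind (A : set pt) (z : pt) : R := if `[< A z >] then 1 else 0.

(** pathwise definition of a snapping-out Brownian motion (conditions
    (i)-(iii)) driven by the Wiener path W and the chain paths s *)
Definition snapping_out (m : nat) (c : nat -> R -> pt) (nv : nat -> pt -> pt)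
    (D : set pt) (x0 : pt) (W : R -> pt) (s : nat -> R -> R)
    (X : R -> pt) (L : nat -> R -> R) : Prop :=
  [/\ [/\ {within nonneg_time, continuous X},
          (forall t, 0 <= t -> D (X t)) &
          (forall j, (j <= m)%N -> {within nonneg_time, continuous (L j)})],
      (forall t, 0 <= t ->
         X t = padd x0 (padd (W t)
           (\big[padd/(0, 0)]_(j < m.+1)
              LSintv (L j) (fun r => pscale (s j (L j r) * ind (range (c j)) (X r))
                                            (nv j (X r))) t))),
      (forall j, (j <= m)%N ->
         [/\ ({in nonneg_time &, {homo L j : a b / a <= b}}), L j 0 = 0 &
             (forall t, 0 <= t -> L j t = LSint (L j) (fun r => ind (range (c j)) (X r)) t)]) &
      (forall j t, (j <= m)%N -> 0 <= t ->
         (s j (L j t) = 1 -> pos_side (range (c j)) (X t)) /\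
         (s j (L j t) = -1 -> neg_side (range (c j)) (X t)))].

End Defs.

From HB Require Import structures.
From mathcomp Require Import all_boot all_order all_algebra.
From mathcomp Require Import all_classical all_reals all_analysis.
From mathcomp Require Import ring lra.
Import Order.TTheory GRing.Theory Num.Theory.
Import numFieldNormedType.Exports HBNNSimple.
Local Open Scope classical_set_scope.
Local Open Scope ring_scope.

(* If s_i has not switched by time r^2 (r := r_delta), then L^(i) stays below
   the first switching time E_1 < alpha r, for otherwise s_i(L^(i)) would reach
   its switched value.  Since r < rho and the segment from x0 to y crosses B_i
   inside B(x0, r), that ball meets no other barrier; so while X stays in it,
   X_t - x0 - W_t is a dL^(i)-integral of unit vectors, hence |X_t - x0 - W_t|
   <= L^(i)_t < alpha r, and by continuity X never leaves the ball before r^2.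
   At time r^2, x0 + W is within gamma r of y, so X is within (alpha + gamma) r
   < r/5 of y, on the far side of B_i, which (iii) forbids for an unswitched
   sign. *)

Section EuclideanPlane.
Context {R : realType}.
Implicit Types (p q u v x y z w : @pt R) (a r M : R) (B : set (@pt R)).

Lemma pnorm_ge0 p : 0 <= pnorm p.
Proof. exact: sqrtr_ge0. Qed.

Lemma pnorm_sqr p : pnorm p ^+ 2 = p.1 ^+ 2 + p.2 ^+ 2.
Proof. by rewrite sqr_sqrtr // addr_ge0 // sqr_ge0. Qed.

Lemma pnorm_le p M : 0 <= M -> (pnorm p <= M) = (p.1 ^+ 2 + p.2 ^+ 2 <= M ^+ 2).
Proof. by move=> M0; rewrite -pnorm_sqr ler_pXn2r // nnegrE pnorm_ge0. Qed.

Lemma pnorm_eq0 p : pnorm p = 0 -> p = (0, 0).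
Proof.
move=> p0; have := pnorm_sqr p; rewrite p0 expr0n /= => /esym/eqP.
rewrite paddr_eq0 ?sqr_ge0 // !sqrf_eq0 => /andP[/eqP p1 /eqP p2].
by case: p p1 p2 {p0} => /= ? ? -> ->.
Qed.

Lemma normr_fst_le p : `|p.1| <= pnorm p.
Proof.
by rewrite -ler_sqr ?nnegrE ?pnorm_ge0 // pnorm_sqr real_normK ?num_real // lerDl sqr_ge0.
Qed.

Lemma normr_snd_le p : `|p.2| <= pnorm p.
Proof.
by rewrite -ler_sqr ?nnegrE ?pnorm_ge0 // pnorm_sqr real_normK ?num_real // lerDr sqr_ge0.
Qed.

Lemma pnorm_le_normD p : pnorm p <= `|p.1| + `|p.2|.
Proof.
rewrite pnorm_le ?addr_ge0 //.
have := real_normK (num_real p.1); have := real_normK (num_real p.2).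
have := normr_ge0 p.1; have := normr_ge0 p.2; nra.
Qed.

Lemma pnormZ a p : pnorm (pscale a p) = `|a| * pnorm p.
Proof.
by rewrite /pnorm /pscale /= !exprMn -mulrDr sqrtrM ?sqr_ge0 // sqrtr_sqr.
Qed.

Lemma pdot_le p q : pdot p q <= pnorm p * pnorm q.
Proof.
have pq0 : 0 <= pnorm p * pnorm q by rewrite mulr_ge0 ?pnorm_ge0.
apply: le_trans (ler_norm _) _; rewrite -ler_sqr ?nnegrE //.
rewrite real_normK ?num_real // exprMn !pnorm_sqr /pdot.
have := sqr_ge0 (p.1 * q.2 - p.2 * q.1); lra.
Qed.

Lemma pnormD_le p q : pnorm (padd p q) <= pnorm p + pnorm q.
Proof.
rewrite pnorm_le ?addr_ge0 ?pnorm_ge0 //.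
have := pnorm_sqr p; have := pnorm_sqr q; have := pdot_le p q.
rewrite /pdot /padd /=; nra.
Qed.

Lemma pnorm_normr p : pnorm (`|p.1|, `|p.2|) = pnorm p.
Proof. by rewrite /pnorm /= !real_normK ?num_real. Qed.

Lemma pnorm_le_dual v M : (forall u, pnorm u <= 1 -> pdot u v <= M) -> pnorm v <= M.
Proof.
move=> hM; have [v0|v_neq0] := eqVneq (pnorm v) 0.
  rewrite v0; apply: le_trans (hM (0, 0) _); first by rewrite /pdot /= !mul0r addr0.
  by rewrite /pnorm /= expr0n /= addr0 sqrtr0 ler01.
have v_gt0 : 0 < pnorm v by rewrite lt_def v_neq0 pnorm_ge0.
apply: le_trans (hM (pscale (pnorm v)^-1 v) _).
  by rewrite /pdot /pscale /= -!mulrA -mulrDr -!expr2 -pnorm_sqr expr2 mulKf.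
by rewrite pnormZ ger0_norm ?invr_ge0 ?pnorm_ge0 // mulVf.
Qed.

Lemma pdistC p q : pdist p q = pdist q p.
Proof. by rewrite /pdist /pnorm /psub /= -sqrrN opprB -(sqrrN (p.2 - q.2)) opprB. Qed.

Lemma pdistxx p : pdist p p = 0.
Proof. by rewrite /pdist /pnorm /psub !subrr expr0n /= addr0 sqrtr0. Qed.

Lemma pdist_triangle p q z : pdist p z <= pdist p q + pdist q z.
Proof.
rewrite /pdist; have -> : psub p z = padd (psub p q) (psub q z).
  by rewrite /psub /padd /=; congr (_, _); ring.
exact: pnormD_le.
Qed.

Lemma pdist_paddl p q : pdist (padd p q) p = pnorm q.
Proof. by rewrite /pdist /psub /padd /=; congr pnorm; case: q => a b /=; congr (_, _); ring. Qed.

Lemma pnorm_le_shift w v a g : 0 <= a <= 1 -> pnorm (psub w (pscale a v)) <= g ->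
  pnorm w <= g + pnorm v.
Proof.
move=> /andP[a0 a1] wg; have -> : w = padd (psub w (pscale a v)) (pscale a v).
  by rewrite /padd /psub /= !subrK; case: w {wg}.
apply: le_trans (pnormD_le _ _) _; rewrite pnormZ ger0_norm // lerD //.
by rewrite ler_piMl ?pnorm_ge0.
Qed.

Lemma pball_nbhs p {r} : 0 < r -> nbhs p (pball p r).
Proof.
move=> r0; apply: filterS (nbhsx_ballx p (r / 2) _); last by rewrite divr_gt0.
move=> q [/= q1 q2]; rewrite /ball /= in q1 q2.
rewrite /pball /= /pdist; apply: le_lt_trans (pnorm_le_normD _) _.
rewrite /psub /= distrC (distrC q.2); lra.
Qed.

Lemma closure_pball {A : set pt} {p r} : closure A p -> 0 < r -> exists2 q, A q & pdist q p < r.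
Proof. by move=> Ap r0; have [q [Aq pq]] := Ap _ (pball_nbhs p r0); exists q. Qed.

Definition seg p q : set (@pt R) :=
  [set padd p (pscale l (psub q p)) | l in `[0, 1]%classic].

Lemma seg_connected p q : connected (seg p q).
Proof.
apply: connected_continuous_connected; first exact: segment_connected.
apply: continuous_subspaceT => l.
rewrite /padd /pscale /continuous_at /=.
apply: (@cvg_pair _ R R (nbhs l) (nbhs _) (nbhs _) _ _ _
  (fun l => p.1 + l * (q.1 - p.1)) (fun l => p.2 + l * (q.2 - p.2))).
  by apply: cvgD; [exact: cvg_cst | apply: cvgM; [exact: cvg_id | exact: cvg_cst]].
by apply: cvgD; [exact: cvg_cst | apply: cvgM; [exact: cvg_id | exact: cvg_cst]].
Qed.

Lemma seg_start p q : seg p q p.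
Proof.
exists 0; first by rewrite /= in_itv /= lexx ler01.
by rewrite /padd /pscale !mul0r !addr0; case: p.
Qed.

Lemma seg_end p q : seg p q q.
Proof.
exists 1; first by rewrite /= in_itv /= lexx ler01.
by rewrite /padd /pscale /psub !mul1r; case: p; case: q => ? ? ? ? /=; rewrite !subrKC.
Qed.

Lemma seg_pdist {p q z} : seg p q z -> pdist z p <= pdist q p.
Proof.
case=> l; rewrite /= in_itv /= => /andP[l0 l1] <-; rewrite /pdist.
have -> : psub (padd p (pscale l (psub q p))) p = pscale l (psub q p).
  by rewrite /psub /padd /pscale /=; congr (_, _); ring.
rewrite pnormZ ger0_norm //; have := pnorm_ge0 (psub q p); nra.
Qed.

Lemma free_pball_component {B p r z} :
  (forall w, pdist w p < r -> ~ B w) -> pdist z p < r ->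
  connected_component (~` B) p z.
Proof.
move=> free zp.
have miss : seg p z `<=` ~` B.
  by move=> w /seg_pdist wp; apply: free; apply: le_lt_trans zp.
exact: (connected_component_max (seg_start p z) miss (seg_connected p z) (seg_end p z)).
Qed.

Lemma free_pball_side {B p r z} : 0 < r ->
  (forall w, pdist w p < r -> ~ B w) -> pdist z p < r ->
  (pos_side B z -> inside B p) /\ (neg_side B z -> outside B p).
Proof.
move=> r0 free zp.
have near_z (A : set pt) : closure A z -> exists2 w, A w & connected_component (~` B) p w.
  move=> Az; have [w Aw wz] : exists2 w, A w & pdist w z < r - pdist z p.
    by apply: closure_pball Az _; rewrite subr_gt0.
  exists w => //; apply: free_pball_component free _.
  by have := pdist_triangle w z p; lra.
have notBp : ~ B p by apply: free; rewrite pdistxx.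
split=> [/near_z [w [_ bw] pw]|/near_z [w [_ bw] pw]].
  by split=> //; rewrite (same_connected_component pw).
by split=> //; rewrite (same_connected_component pw).
Qed.

Lemma seg_meets_barrier {B x y} :
  inside B x /\ outside B y \/ outside B x /\ inside B y ->
  exists2 z, seg x y z & B z.
Proof.
move=> sides; apply: contrapT => meet.
have miss : seg x y `<=` ~` B by move=> z xyz Bz; apply: meet; exists z.
have xy := connected_component_max (seg_start x y) miss (seg_connected x y) (seg_end x y).
move: sides; rewrite /inside /outside /= (same_connected_component xy).
by case=> -[[_ ?] [_ ?]].
Qed.

End EuclideanPlane.

Section Barriers.
Context {R : realType}.
Implicit Types (c : R -> @pt R) (m : nat).

Lemma smooth_fun_continuous (f : R -> R) : smooth_fun f -> continuous f.
Proof. by move=> sf x; apply/differentiable_continuous/derivable1_diffP/(sf 0%N). Qed.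

Lemma smooth_param_continuous {c} : smooth_simple_closed_param c -> continuous c.
Proof.
case=> sx sy _ _ _ t.
have -> : c = (fun t => (cx c t, cy c t)) by apply: funext => u; rewrite /cx /cy; case: (c u).
apply: (@cvg_pair _ R R (nbhs t) (nbhs _) (nbhs _) _ _ _ (cx c) (cy c)).
  exact: smooth_fun_continuous.
exact: smooth_fun_continuous.
Qed.

Lemma periodic_intr {T : Type} {f : R -> T} : (forall t, f (t + 1) = f t) ->
  forall (k : int) t, f (t + k%:~R) = f t.
Proof.
move=> per; have perN (n : nat) t : f (t + n%:R) = f t.
  by elim: n t => [|n IH] t; rewrite ?addr0 // -natr1 addrA per IH.
case=> n t; first exact: perN.
by rewrite NegzE mulrNz -[in RHS](subrK n.+1%:R t) perN.
Qed.

Lemma range_periodic {T : Type} {f : R -> T} : (forall t, f (t + 1) = f t) ->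
  range f = f @` `[0, 1]%classic.
Proof.
move=> per; apply/seteqP; split=> p [t _ <-]; last by exists t.
have /andP[fl_le lt_fl] := floor_itv t.
exists (t - (Num.floor t)%:~R).
  by rewrite /= in_itv /= subr_ge0 fl_le /=; move: lt_fl; rewrite intrD; lra.
by rewrite -[in RHS](subrK (Num.floor t)%:~R t) periodic_intr.
Qed.

Lemma smooth_param_closed {c} : smooth_simple_closed_param c -> closed (range c).
Proof.
move=> sc; have cc := smooth_param_continuous sc; case: sc => _ _ per _ _.
rewrite (range_periodic per); apply: compact_closed; first exact: norm_hausdorff.
by apply: continuous_compact; [exact: continuous_subspaceT | exact: segment_compact].
Qed.

Lemma closed_bigcup_ltn (T : topologicalType) (F : nat -> set T) n :
  (forall k, (k < n)%N -> closed (F k)) -> closed [set z | exists2 k, (k < n)%N & F k z].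
Proof.
elim: n => [|n IH] clF.
  by rewrite (_ : [set z | _] = set0); [exact: closed0 | apply/seteqP; split=> z // []].
rewrite (_ : [set z | _] = [set z | exists2 k, (k < n)%N & F k z] `|` F n).
  by apply: closedU; [apply: IH => k /ltnW/clF | exact: clF].
apply/seteqP; split=> z.
  by case=> k; rewrite ltnS leq_eqVlt => /orP[/eqP ->|kn Fz]; [right | left; exists k].
by case=> [[k /ltnW kn Fz]|Fz]; [exists k | exists n].
Qed.

Lemma connected_barrier_unique {m} {c : nat -> R -> pt} {K : set pt} {i j z} :
  (forall k, (k <= m)%N -> closed (range (c k))) ->
  (forall k l, (k <= m)%N -> (l <= m)%N -> k != l -> range (c k) `&` range (c l) = set0) ->
  connected (K `&` Bunion m c) -> (i <= m)%N -> (K `&` range (c i)) !=set0 ->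
  (j <= m)%N -> j != i -> K z -> ~ range (c j) z.
Proof.
move=> cl disj conK im [p [Kp ip]] jm ji Kz jz.
have disj_i k w : (k <= m)%N -> k != i -> range (c i) w -> ~ range (c k) w.
  move=> km ki iw kw; have := disj i k im km; rewrite eq_sym ki => /(_ isT).
  by move/seteqP => [/(_ w (conj iw kw))].
set others := [set w | exists2 k, (k < m.+1)%N & (if k != i then range (c k) else set0) w].
have cl_others : closed others.
  by apply: closed_bigcup_ltn => k km; case: ifP => _; [exact: cl | exact: closed0].
have Ki : K `&` Bunion m c `&` range (c i) = K `&` Bunion m c.
  apply: conK; first by exists p; split=> //; split=> //; exists i.
    exists (~` others); first by rewrite openC.
    apply/seteqP; split=> w.
      move=> [[Kw [k km kw]] iw]; split; first by split=> //; exists k.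
      by move=> [k' /ltnSE k'm]; case: ifP => // k'i; apply: disj_i iw.
    move=> [[Kw [k km kw]] not_other]; split; first by split=> //; exists k.
    by have [<- //|ki] := eqVneq k i; case: not_other; exists k; rewrite ?ki.
  by exists (range (c i)) => //; exact: cl.
have : (K `&` Bunion m c) z by split=> //; exists j.
by rewrite -Ki => -[_ iz]; apply: disj_i iz jz.
Qed.

Lemma kappa_ge0 m (c : nat -> R -> pt) : 0 <= kappa m c.
Proof.
rewrite /kappa; set K := [set k | _].
have [supK|/sup_out ->//] := pselect (has_sup K).
apply: le_trans (sup_upper_bound supK _); last by exists 0%N, 0; split.
by rewrite /ucurv divr_ge0 // exprn_ge0 // sqrtr_ge0.
Qed.

Lemma lambda_max_ge0 m (lp lm : nat -> R) : 0 <= lambda_max m lp lm.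
Proof. exact: bigmax_ge_id. Qed.

Lemma rho_ge0 (D : set pt) m (c : nat -> R -> pt) : 0 <= rho D m c.
Proof.
rewrite /rho; set S := [set r | _].
have [supS|/sup_out ->//] := pselect (has_sup S).
apply: (sup_upper_bound supS); split=> // r x r0 Dx.
rewrite (_ : _ `&` _ = set0); first exact: connected0.
apply/seteqP; split=> // z [+ _]; rewrite /pball /= /pdist.
by have := pnorm_ge0 (psub z x); lra.
Qed.

Lemma rho_connected {D : set pt} {m} {c : nat -> R -> pt} {r x} :
  0 <= r -> r < rho D m c -> D x -> connected (pball x r `&` Bunion m c).
Proof.
move=> r0 r_lt Dx; rewrite /rho in r_lt; set S := [set r | _] in r_lt.
have supS : has_sup S.
  by apply: contrapT => /sup_out Sout; move: r_lt; rewrite Sout ltNge r0.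
have gap : 0 < sup S - r by rewrite subr_gt0.
have [r' [_ Sr'] rr'] := sup_adherent gap supS.
by apply: Sr' => //; move: rr'; rewrite opprB addrC subrK => /ltW.
Qed.

Lemma r_delta_lt_rho {D : set pt} {m} {c : nat -> R -> pt} {lp lm delta} :
  0 < r_delta delta (kappa m c) (lambda_max m lp lm) (rho D m c) -> delta < 1 ->
  r_delta delta (kappa m c) (lambda_max m lp lm) (rho D m c) < rho D m c.
Proof.
rewrite /r_delta; set M := Num.min _ _ => rd_gt0 delta_lt1.
have M0 : 0 <= M.
  by rewrite !le_min !invr_ge0 kappa_ge0 lambda_max_ge0 rho_ge0.
have Mrho : M <= rho D m c by rewrite ge_min lexx orbT.
have M_gt0 : 0 < M.
  by rewrite lt_def M0 andbT; apply/eqP => M_0; move: rd_gt0; rewrite M_0 mulr0 ltxx.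
have delta_gt0 : 0 < delta by rewrite -(pmulr_lgt0 _ M_gt0).
by apply: lt_le_trans Mrho; rewrite gtr_pMl.
Qed.

End Barriers.

(* The integrands here need not be measurable: for nonnegative [h] the integral
   [\int[mu]_(x in D) h x] is then the upper integral (the supremum over simple
   functions below [h]), so linearity is not available and only
   superadditivity is proved. *)
Section UpperIntegral.
Context {d} {T : measurableType d} {R : realType}.
Context {mu : {measure set T -> \bar R}} {D : set T} {M : R}.
Hypotheses (mD : measurable D) (muD : mu D = M%:E).

Let J (h : T -> R) := (\int[mu]_(x in D) (h x)%:E)%E.

Let below (h : T -> R) (s : {nnsfun T >-> R}) :=
  forall x, ((s x)%:E <= ((fun x => (h x)%:E) \_ D) x)%E.

Lemma sintegral_le_upper_integral {h s} :
  (forall x, D x -> 0 <= h x) -> below h s -> (sintegral mu s <= J h)%E.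
Proof.
move=> h0 hs; rewrite /J ge0_integralE; last by move=> x /h0; rewrite lee_fin.
by apply: ereal_sup_ubound; exists s.
Qed.

Lemma upper_integral_approx {h} x :
  (forall x, D x -> 0 <= h x) -> (x < J h)%E -> exists2 s, below h s & (x < sintegral mu s)%E.
Proof.
move=> h0; rewrite /J ge0_integralE; last by move=> y /h0; rewrite lee_fin.
by move=> /ereal_sup_gt [_ [s hs <-] lt]; exists s.
Qed.

Lemma upper_integral_unit {h} : (forall x, D x -> 0 <= h x <= 1) ->
  J h = (fine (J h))%:E /\ 0 <= fine (J h) <= M.
Proof.
move=> h01.
have J0 : (0 <= J h)%E by apply: integral_ge0 => x /h01 /andP[h0 _]; rewrite lee_fin.
have JM : (J h <= M%:E)%E.
  rewrite -muD /J ge0_integralE; last by move=> x /h01 /andP[h0 _]; rewrite lee_fin.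
  apply: ge_ereal_sup => _ [s hs <-]; rewrite -(sintegral_indic mu D).
  apply: (@le_sintegral _ _ _ mu s (indic_nnsfun R mD)) => x /=.
  move: (hs x); rewrite /patch measurable_realfun.mindicE; case: ifP => xD.
    by rewrite lee_fin => /le_trans; apply; move: xD; rewrite inE => /h01 /andP[].
  by rewrite lee_fin.
have Jfin : J h \is a fin_num by rewrite ge0_fin_numE // (le_lt_trans JM) ?ltry.
by split; [rewrite fineK | rewrite fine_ge0 //= -lee_fin fineK].
Qed.

Lemma upper_integral_superadditive {a b h1 h2} : 0 <= a -> 0 <= b ->
  (forall x, D x -> 0 <= h1 x <= 1) -> (forall x, D x -> 0 <= h2 x <= 1) ->
  (forall x, D x -> a * h1 x + b * h2 x <= 1) ->
  a * fine (J h1) + b * fine (J h2) <= fine (J (fun x => a * h1 x + b * h2 x)).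
Proof.
move=> a0 b0 h1_01 h2_01 h_le1.
have h_01 x : D x -> 0 <= a * h1 x + b * h2 x <= 1.
  move=> Dx; have /andP[h1x _] := h1_01 x Dx; have /andP[h2x _] := h2_01 x Dx.
  by rewrite h_le1 // andbT addr_ge0 // mulr_ge0.
have h1_0 x : D x -> 0 <= h1 x by move=> /h1_01 /andP[].
have h2_0 x : D x -> 0 <= h2 x by move=> /h2_01 /andP[].
have [J1 _] := upper_integral_unit h1_01.
have [J2 _] := upper_integral_unit h2_01.
have [J3 _] := upper_integral_unit h_01.
apply/ler_addgt0Pr => e e0; set e' := e / (a + b + 1).
have e'_gt0 : 0 < e' by rewrite divr_gt0 // ltr_wpDl // addr_ge0.
have e'E : e' * (a + b + 1) = e by rewrite divfK // gt_eqF // ltr_wpDl // addr_ge0.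
have [s1 s1h1 lt1] : exists2 s, below h1 s & ((fine (J h1) - e')%:E < sintegral mu s)%E.
  by apply: upper_integral_approx => //; rewrite {2}J1 lte_fin ltrBlDr ltrDl.
have [s2 s2h2 lt2] : exists2 s, below h2 s & ((fine (J h2) - e')%:E < sintegral mu s)%E.
  by apply: upper_integral_approx => //; rewrite {2}J2 lte_fin ltrBlDr ltrDl.
have le1 := sintegral_le_upper_integral h1_0 s1h1.
have le2 := sintegral_le_upper_integral h2_0 s2h2.
set S := add_nnsfun (scale_nnsfun s1 a0) (scale_nnsfun s2 b0).
have S_le : (sintegral mu S <= J (fun x => (a * h1 x + b * h2 x)%R))%E.
  apply: sintegral_le_upper_integral => [x /h_01 /andP[] //|x].
  move: (s1h1 x) (s2h2 x); rewrite /S /patch /=; case: ifP => _; rewrite !lee_fin.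
    by move=> q1 q2; apply: lerD; apply: ler_wpM2l.
  by move=> q1 q2; rewrite -(addr0 0) lerD // mulr_ge0_le0.
have SE : sintegral mu S = (a%:E * sintegral mu s1 + b%:E * sintegral mu s2)%E.
  by rewrite /S sintegralD /scale_nnsfun /= !sintegralrM.
have s1E : sintegral mu s1 = (fine (sintegral mu s1))%:E.
  by rewrite fineK // ge0_fin_numE ?sintegral_ge0 // (le_lt_trans le1) // J1 ltry.
have s2E : sintegral mu s2 = (fine (sintegral mu s2))%:E.
  by rewrite fineK // ge0_fin_numE ?sintegral_ge0 // (le_lt_trans le2) // J2 ltry.
move: S_le lt1 lt2; rewrite SE s1E s2E {1}J3 -!EFinM -EFinD !lte_fin lee_fin.
set v1 := fine (sintegral mu s1); set v2 := fine (sintegral mu s2).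
move=> S_le lt1 lt2.
have : a * fine (J h1) <= a * v1 + a * e' by rewrite -mulrDr ler_wpM2l // -lerBlDr ltW.
have : b * fine (J h2) <= b * v2 + b * e' by rewrite -mulrDr ler_wpM2l // -lerBlDr ltW.
nra.
Qed.

Lemma Rintegral_upper_split g :
  Rintegral mu D g = fine (J (fun x => Num.max (g x) 0)%R - J (fun x => Num.max (- g x) 0)%R)%E.
Proof.
rewrite /Rintegral integralE /J; congr (fine (_ - _)).
  by congr (integral _ _ _); apply: funext => x; rewrite funeposE /= EFin_max.
by congr (integral _ _ _); apply: funext => x; rewrite funenegE /= EFin_max.
Qed.

(* The part of [g] whose sign agrees with [u] carries [u * \int g]. *)
Lemma Rintegral_scale_le u g : (forall x, D x -> `|g x| <= 1) ->
  u * Rintegral mu D g <=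
  `|u| * fine (J (fun x => Num.max (if 0 <= u then g x else - g x) 0)).
Proof.
move=> g1.
have pos_01 (f : T -> R) : (forall x, D x -> `|f x| <= 1) ->
    forall x, D x -> 0 <= Num.max (f x) 0 <= 1.
  by move=> f1 x Dx; rewrite le_max lexx orbT ge_max ler01 andbT (le_trans (ler_norm _)) ?f1.
have [Jp /andP[Jp0 _]] := upper_integral_unit (pos_01 g g1).
have gN1 x : D x -> `|- g x| <= 1 by rewrite normrN; exact: g1.
have [Jn /andP[Jn0 _]] := upper_integral_unit (pos_01 (fun x => - g x) gN1).
rewrite Rintegral_upper_split Jp Jn -EFinB /=.
case: (lerP 0 u) => [u0|u_lt0]; first by rewrite ger0_norm // mulrBr lerBlDr lerDl mulr_ge0.
by rewrite ltr0_norm //; nra.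
Qed.

Lemma Rintegral_pdot_le (g : T -> @pt R) (u : @pt R) :
  (forall x, D x -> pnorm (g x) <= 1) -> pnorm u <= 1 ->
  pdot u (Rintegral mu D (fun x => (g x).1), Rintegral mu D (fun x => (g x).2)) <= M.
Proof.
move=> g1 u1.
pose h (v : R) (f : T -> R) x := Num.max (if 0 <= v then f x else - f x) 0.
pose h1 := h u.1 (fun x => (g x).1); pose h2 := h u.2 (fun x => (g x).2).
have h_le (v : R) f x : 0 <= h v f x <= `|f x|.
  rewrite /h le_max lexx orbT ge_max normr_ge0 andbT.
  by case: ifP => _; [exact: ler_norm | rewrite -normrN; exact: ler_norm].
have g1_le x : D x -> `|(g x).1| <= 1 by move=> Dx; apply: le_trans (normr_fst_le _) (g1 x Dx).
have g2_le x : D x -> `|(g x).2| <= 1 by move=> Dx; apply: le_trans (normr_snd_le _) (g1 x Dx).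
have h1_01 x : D x -> 0 <= h1 x <= 1.
  by move=> Dx; have /andP[-> /le_trans ->] := h_le u.1 (fun x => (g x).1) x; rewrite ?g1_le.
have h2_01 x : D x -> 0 <= h2 x <= 1.
  by move=> Dx; have /andP[-> /le_trans ->] := h_le u.2 (fun x => (g x).2) x; rewrite ?g2_le.
have hsum_le1 x : D x -> `|u.1| * h1 x + `|u.2| * h2 x <= 1.
  move=> Dx; have /andP[_ h1g] := h_le u.1 (fun x => (g x).1) x.
  have /andP[_ h2g] := h_le u.2 (fun x => (g x).2) x.
  apply: le_trans (lerD (ler_wpM2l (normr_ge0 _) h1g) (ler_wpM2l (normr_ge0 _) h2g)) _.
  apply: le_trans (pdot_le (`|u.1|, `|u.2|) (`|(g x).1|, `|(g x).2|)) _.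
  by rewrite !pnorm_normr mulr_ile1 ?pnorm_ge0 ?g1.
have hsum_01 x : D x -> 0 <= `|u.1| * h1 x + `|u.2| * h2 x <= 1.
  move=> Dx; have /andP[? _] := h1_01 x Dx; have /andP[? _] := h2_01 x Dx.
  by rewrite hsum_le1 // andbT addr_ge0 // mulr_ge0.
have [_ /andP[_ JM]] := upper_integral_unit hsum_01.
apply: le_trans JM; apply: le_trans (upper_integral_superadditive _ _ h1_01 h2_01 hsum_le1);
  rewrite ?normr_ge0 //.
by apply: lerD; apply: Rintegral_scale_le.
Qed.

End UpperIntegral.

Lemma within_continuous_dist {R : realType} {f : R -> R} {A : set R} {a e : R} :
  {within A, continuous f} -> A a -> 0 < e ->
  exists2 d, 0 < d & forall s, A s -> `|a - s| < d -> `|f a - f s| < e.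
Proof.
move=> /subspace_continuousP /[apply] /cvgrPdist_lt f_cvg e0.
have /nbhs_ballP [d d0 fd] := f_cvg e e0.
by exists d => // s As as_d; apply: fd.
Qed.

Lemma lebesgue_stieltjes_itv_oc {R : realType} (f : cumulative R R) a b : a < b ->
  lebesgue_stieltjes_measure f `]a, b]%classic = (f b - f a)%:E.
Proof.
move=> ab; rewrite /lebesgue_stieltjes_measure /measure_extension /=.
rewrite measurable_mu_extE /=; last exact: is_ocitv.
by rewrite wlength_itv /= lte_fin ab EFinB.
Qed.

Section LocalTimeIntegral.
Context {R : realType} {L : R -> R}.
Hypotheses (L_cont : {within nonneg_time, continuous L})
  (L_homo : {in nonneg_time &, {homo L : a b / a <= b}}) (L0 : L 0 = 0).

Lemma ext0_continuous : continuous (ext0 L).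
Proof.
have max0_nonneg (x : R) : nonneg_time (Num.max x 0) by rewrite /nonneg_time /= le_max lexx orbT.
move=> x; apply/cvgrPdist_lt => e e0.
have [d d0 Ld] := within_continuous_dist L_cont (max0_nonneg x) e0.
apply/nbhs_ballP; exists d => // t; rewrite /ball /= => xt.
apply: Ld; first exact: max0_nonneg.
apply: le_lt_trans xt; case: (lerP x 0) => x0; case: (lerP t 0) => t0.
- by rewrite subrr normr0.
- by rewrite sub0r normrN (ger0_norm (ltW t0)) distrC ger0_norm; lra.
- by rewrite subr0 (ger0_norm (ltW x0)) ger0_norm; lra.
- by [].
Qed.

Lemma ext0_nondecreasing : nondecreasing (ext0 L).
Proof.
have max0_in (x : R) : Num.max x 0 \in nonneg_time by rewrite inE /nonneg_time /= le_max lexx orbT.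
move=> a b ab; apply: L_homo; rewrite ?max0_in //.
by rewrite ge_max !le_max ab lexx !orbT.
Qed.

Lemma stieltjes_itv_oc {a b} : a < b ->
  stieltjes (ext0 L) `]a, b]%classic = (ext0 L b - ext0 L a)%:E.
Proof.
move=> ab; rewrite /stieltjes; case: pselect => [ndec_rcont|[]]; last first.
  by split; [exact: ext0_nondecreasing | apply: right_continuousW; exact: ext0_continuous].
exact: lebesgue_stieltjes_itv_oc.
Qed.

Lemma stieltjes_itv_cc {t} : 0 <= t ->
  exists M, stieltjes (ext0 L) `[0, t]%classic = M%:E /\ 0 <= M <= L t.
Proof.
move=> t0; have m1t : -1 < t by apply: lt_le_trans t0; exact: ltrN10.
have oc : stieltjes (ext0 L) `]-1, t]%classic = (L t)%:E.
  by rewrite (stieltjes_itv_oc m1t) /ext0 (max_l t0) (max_r (ltW (@ltrN10 R))) L0 subr0.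
have cc_le : (stieltjes (ext0 L) `[0%R, t]%classic <= (L t)%:E)%E.
  rewrite -oc; apply: le_measure; rewrite ?inE; try exact: measurable_itv.
  move=> x; rewrite /= !in_itv /= => /andP[x0 ->]; rewrite andbT.
  exact: lt_le_trans (@ltrN10 R) x0.
have cc_ge0 := measure_ge0 (stieltjes (ext0 L)) `[0, t]%classic.
have cc_fin : stieltjes (ext0 L) `[0, t]%classic \is a fin_num.
  by rewrite ge0_fin_numE // (le_lt_trans cc_le) // ltry.
exists (fine (stieltjes (ext0 L) `[0, t]%classic)).
by split; [rewrite fineK | rewrite fine_ge0 //= -lee_fin fineK].
Qed.

Lemma LSintv_pnorm_le (g : R -> @pt R) t : 0 <= t ->
  (forall r, 0 <= r <= t -> pnorm (g r) <= 1) -> pnorm (LSintv L g t) <= L t.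
Proof.
move=> t0 g1; have [M [muM /andP[_ ML]]] := stieltjes_itv_cc t0.
apply: le_trans ML; apply: pnorm_le_dual => u u1; rewrite /LSintv /LSint.
exact: (@Rintegral_pdot_le _ _ R (stieltjes (ext0 L)) _ _ (measurable_itv _) muM).
Qed.

End LocalTimeIntegral.

Lemma LSint_eq0 {R : realType} (L g : R -> R) t :
  (forall r, 0 <= r <= t -> g r = 0) -> LSint L g t = 0.
Proof.
move=> g0; rewrite /LSint /Rintegral integral0_eq //.
by move=> x; rewrite /= in_itv /= => /g0 ->.
Qed.

Section Paths.
Context {R : realType}.

Lemma first_switch {s : R -> R} {x} : cadlag s -> (forall t, 0 <= t -> s t = 1 \/ s t = -1) ->
  (E1 s < x%:E)%E -> exists e, [/\ E1 s = e%:E, 0 <= e & s e != s 0].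
Proof.
move=> s_cadlag s_pm1.
set S := [set t | 0 <= t /\ s t != s 0].
have E1_ge0 : (0 <= E1 s)%E by apply: le_ereal_inf_tmp => _ [t [t0 _] <-]; rewrite lee_fin.
rewrite /E1 -/S => /ereal_inf_lt [_ [t1 [t10 st1] <-] _].
have E1_fin : E1 s \is a fin_num.
  rewrite ge0_fin_numE // (@le_lt_trans _ _ t1%:E) ?ltry //.
  by apply: ereal_inf_lbound; exists t1.
set e := fine (E1 s); have E1E : E1 s = e%:E by rewrite fineK.
have e0 : 0 <= e by rewrite fine_ge0.
have before u : 0 <= u < e -> s u = s 0.
  move=> /andP[u0 ue]; apply/eqP; apply: contraTT ue => su.
  by rewrite -leNgt -lee_fin -E1E; apply: ereal_inf_lbound; exists u.
exists e; split=> //; apply/negP => /eqP se.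
(* right-continuity at [e] and the values [+-1] keep [s] constant just after [e] *)
have [d d0 near_e] : exists2 d, 0 < d & forall u, e < u < e + d -> s u = s e.
  have /cvgrPdist_lt /(_ 1 ltr01) := proj1 (s_cadlag e e0).
  rewrite /at_right /within /= => /nbhs_ballP [d d0 sd].
  exists d => // u /andP[eu ued].
  have : `|s e - s u| < 1.
    by apply: sd => //; rewrite /ball /= ltr0_norm ?subr_lt0 // opprB ltrBlDl.
  have [->|->] := s_pm1 e e0; have [->|->] := s_pm1 u (le_trans e0 (ltW eu)) => //;
    rewrite ?opprK -?opprD ?normrN ger0_norm; lra.
have : ((e + d)%:E <= E1 s)%E.
  apply: le_ereal_inf_tmp => _ [t [t0 st] <-]; rewrite lee_fin leNgt.
  apply/negP => ted; move/negP: st; apply; apply/eqP.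
  have [te|et|->] := ltgtP t e; first by apply: before; rewrite t0 te.
    by rewrite near_e ?et.
  exact: se.
by rewrite E1E lee_fin; lra.
Qed.

Lemma local_time_lt_switch {L s : R -> R} {e T} :
  {within nonneg_time, continuous L} -> L 0 = 0 -> 0 <= e -> s e != s 0 ->
  (forall t, 0 <= t <= T -> s (L t) = s 0) -> forall t, 0 <= t <= T -> L t < e.
Proof.
move=> L_cont L0 e0 se no_switch t /andP[t0 tT]; rewrite ltNge; apply/negP => et.
have L_cont_t : {within `[0, t], continuous L}.
  by apply: continuous_subspaceW (L_cont) => u; rewrite /= in_itv /= => /andP[].
have [u u0t Lu] : exists2 u, u \in `[0, t] & L u = e.
  apply: (IVT t0 L_cont_t).
  by rewrite L0 (min_l (le_trans e0 et)) (max_r (le_trans e0 et)) e0 et.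
move: u0t; rewrite in_itv /= => /andP[u0 ut].
by move: se; rewrite -Lu no_switch ?eqxx // u0 (le_trans ut tT).
Qed.

Lemma within_continuous_zero {f : R -> R} {tau} :
  {within nonneg_time, continuous f} -> 0 <= tau -> f 0 = 0 ->
  (forall u, 0 <= u < tau -> f u = 0) -> f tau = 0.
Proof.
move=> f_cont tau0 f0 f_zero; have [->//|tau_neq0] := eqVneq tau 0.
have tau_gt0 : 0 < tau by rewrite lt_def tau_neq0 tau0.
apply/eqP; apply: contraT => f_tau; have f_tau_gt0 : 0 < `|f tau| by rewrite normr_gt0.
have [d d0 fd] := within_continuous_dist f_cont tau0 f_tau_gt0.
pose u := Num.max 0 (tau - d / 2).
have u0 : 0 <= u by rewrite le_max lexx.
have u_tau : u < tau by rewrite gt_max tau_gt0 ltrBlDr ltrDl divr_gt0.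
have : `|tau - u| < d.
  have : tau - d / 2 <= u by rewrite le_max lexx orbT.
  by rewrite ger0_norm ?subr_ge0 ?(ltW u_tau) //; lra.
by move/(fd u u0); rewrite (f_zero u) ?u0 ?u_tau // subr0 ltxx.
Qed.

Lemma within_continuous_pdist {X : R -> @pt R} {A : set R} {a e : R} :
  {within A, continuous X} -> A a -> 0 < e ->
  exists2 d, 0 < d & forall s, A s -> `|a - s| < d -> pdist (X s) (X a) < e.
Proof.
move=> /subspace_continuousP X_cont Aa e0.
have fst_cont : {within A, continuous (fun t => (X t).1)}.
  by apply/subspace_continuousP => t At; apply: cvg_comp (X_cont t At) cvg_fst.
have snd_cont : {within A, continuous (fun t => (X t).2)}.
  by apply/subspace_continuousP => t At; apply: cvg_comp (X_cont t At) cvg_snd.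
have e2 : 0 < e / 2 by rewrite divr_gt0.
have [d1 d1_gt0 Xd1] := within_continuous_dist fst_cont Aa e2.
have [d2 d2_gt0 Xd2] := within_continuous_dist snd_cont Aa e2.
exists (Num.min d1 d2) => [|s As]; first by rewrite lt_min d1_gt0.
rewrite lt_min => /andP[s1 s2]; have := Xd1 s As s1; have := Xd2 s As s2.
rewrite /pdist => q2 q1; apply: le_lt_trans (pnorm_le_normD _) _.
by rewrite /psub /= (distrC (X s).1) (distrC (X s).2) (splitr e) ltrD.
Qed.

Lemma pdist_lt_continuation {X : R -> @pt R} {x r T} :
  {within nonneg_time, continuous X} ->
  (forall t, 0 <= t <= T -> (forall u, 0 <= u < t -> pdist (X u) x < r) -> pdist (X t) x < r) ->
  forall t, 0 <= t <= T -> pdist (X t) x < r.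
Proof.
move=> X_cont step t0 /andP[t00 t0T]; rewrite ltNge; apply/negP => t0_out.
set G := [set t | 0 <= t <= T /\ r <= pdist (X t) x].
have G_lb : lbound G 0 by move=> t [/andP[]].
have Gt0 : G t0 by split; rewrite ?t00.
have G_inf : has_inf G by split; [exists t0 | exists 0].
have inf_le t : G t -> inf G <= t by move=> Gt; apply: (ge_inf _ Gt); exists 0.
set tau := inf G.
have tau0 : 0 <= tau by apply: lb_le_inf => //; exists t0.
have tauT : tau <= T := le_trans (inf_le t0 Gt0) t0T.
have before u : 0 <= u < tau -> pdist (X u) x < r.
  move=> /andP[u0 u_tau]; rewrite ltNge; apply/negP => u_out.
  have : tau <= u by apply: inf_le; split=> //; rewrite u0 (le_trans (ltW u_tau)).
  by rewrite leNgt u_tau.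
have tau_in : pdist (X tau) x < r by apply: step; rewrite ?tau0.
have gap : 0 < r - pdist (X tau) x by rewrite subr_gt0.
have [d d0 Xd] := within_continuous_pdist X_cont tau0 gap.
have [g [/andP[g0 gT] g_out] g_lt] := inf_adherent d0 G_inf.
have tau_g : tau <= g by apply: inf_le; split=> //; rewrite g0.
have : pdist (X g) (X tau) < r - pdist (X tau) x.
  by apply: Xd => //; rewrite ler0_norm ?subr_le0 // opprB ltrBlDr addrC.
by have := pdist_triangle (X g) (X tau) x; lra.
Qed.

End Paths.

Lemma big_padd_only {R : realType} n i (F : nat -> @pt R) : (i < n)%N ->
  (forall j, (j < n)%N -> j != i -> F j = (0, 0)) -> \big[padd/(0, 0)]_(j < n) F j = F i.
Proof.
have padd0 (p : @pt R) : padd (0, 0) p = p by case: p => ? ?; rewrite /padd /= !add0r.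
have paddp0 (p : @pt R) : padd p (0, 0) = p by case: p => ? ?; rewrite /padd /= !addr0.
elim: n i F => [//|n IH] [|i] F i_lt F0; rewrite big_ord_recl /=.
  rewrite (_ : \big[padd/(0, 0)]_(j < n) _ = (0, 0)) ?paddp0 //.
  elim/big_ind: _ => // [p q -> ->|j _]; first exact: padd0.
  by apply: F0; rewrite -[bump _ _]/(j.+1) ?ltnS.
rewrite F0 // padd0 (eq_bigr (fun j : 'I_n => F j.+1)) => [|j _] //.
by apply: (IH i (fun j => F j.+1)) => // j jn ji; apply: F0.
Qed.

Section Geometry.
Context {R : realType}.
Context {D : set (@pt R)} {m : nat} {c : nat -> R -> @pt R} {r : R}.

Lemma Ddelta_free {x j z} :
  Ddelta D m c r x -> (j <= m)%N -> pdist z x < r / 5 -> ~ range (c j) z.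
Proof.
by move=> [_ far] jm zx cjz; move: (far z (ex_intro2 _ _ j jm cjz)); rewrite pdistC leNgt zx.
Qed.

Lemma Ddelta_side {i y z} : 0 < r -> (i <= m)%N -> Ddelta D m c r y -> pdist z y < r / 5 ->
  (pos_side (range (c i)) z -> inside (range (c i)) y) /\
  (neg_side (range (c i)) z -> outside (range (c i)) y).
Proof.
move=> r0 im Dy; apply: free_pball_side; first by rewrite divr_gt0.
by move=> w; apply: Ddelta_free Dy im.
Qed.

Lemma Ddelta_sides {i x y} : 0 < r -> (i <= m)%N -> Ddelta D m c r x -> Ddelta D m c r y ->
  pos_side (range (c i)) x /\ neg_side (range (c i)) y \/
  neg_side (range (c i)) x /\ pos_side (range (c i)) y ->
  inside (range (c i)) x /\ outside (range (c i)) y \/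
  outside (range (c i)) x /\ inside (range (c i)) y.
Proof.
move=> r0 im Dx Dy; have centre p : pdist p p < r / 5 by rewrite pdistxx divr_gt0.
have [x_pos x_neg] := Ddelta_side r0 im Dx (centre x).
have [y_pos y_neg] := Ddelta_side r0 im Dy (centre y).
by case=> -[xs ys]; [left; split; [apply: x_pos | apply: y_neg] |
  right; split; [apply: x_neg | apply: y_pos]].
Qed.

(* The segment from [x] to [y] crosses [B_i] inside the ball, so the connected
   set [pball x r `&` Bunion m c] meets [B_i] and hence no other barrier. *)
Lemma crossed_barrier_isolates {i x y} :
  (forall k, (k <= m)%N -> closed (range (c k))) ->
  (forall k l, (k <= m)%N -> (l <= m)%N -> k != l -> range (c k) `&` range (c l) = set0) ->
  connected (pball x r `&` Bunion m c) -> (i <= m)%N ->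
  inside (range (c i)) x /\ outside (range (c i)) y \/
  outside (range (c i)) x /\ inside (range (c i)) y ->
  pdist y x < r -> forall j z, (j <= m)%N -> j != i -> pdist z x < r -> ~ range (c j) z.
Proof.
move=> cl disj conn im sides yx j z jm ji zx.
have [w /seg_pdist wx iw] := seg_meets_barrier sides.
apply: (connected_barrier_unique cl disj conn im _ jm ji zx).
by exists w; split=> //; rewrite /pball /=; apply: le_lt_trans yx.
Qed.

Lemma Ddelta_isolated {i x y} : 0 < r -> r < rho D m c -> (i <= m)%N ->
  (forall k, (k <= m)%N -> closed (range (c k))) ->
  (forall k l, (k <= m)%N -> (l <= m)%N -> k != l -> range (c k) `&` range (c l) = set0) ->
  Ddelta D m c r x -> Ddelta D m c r y -> pdist x y <= 4 / 5 * r ->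
  pos_side (range (c i)) x /\ neg_side (range (c i)) y \/
  neg_side (range (c i)) x /\ pos_side (range (c i)) y ->
  forall j z, (j <= m)%N -> j != i -> pdist z x < r -> ~ range (c j) z.
Proof.
move=> r0 r_rho im cl disj Dx Dy xy sides.
have conn := rho_connected (ltW r0) r_rho (proj1 Dx).
have yx : pdist y x < r by rewrite pdistC; lra.
exact: crossed_barrier_isolates cl disj conn im (Ddelta_sides r0 im Dx Dy sides) yx.
Qed.

End Geometry.

Section SnappingOut.
Context {R : realType}.
Context {m : nat} {c : nat -> R -> @pt R} {nv : nat -> @pt R -> @pt R} {D : set (@pt R)}.
Context {x0 : @pt R} {W : R -> @pt R} {s : nat -> R -> R} {X : R -> @pt R} {L : nat -> R -> R}.
Hypothesis SO : snapping_out m c nv D x0 W s X L.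
Hypothesis nv_unit : forall j, (j <= m)%N -> inward_unit_normal (c j) (nv j).
Hypothesis s0_1 : forall t, s 0%N t = 1.
Hypothesis s_pm1 : forall j t, (1 <= j <= m)%N -> 0 <= t -> s j t = 1 \/ s j t = -1.

Lemma local_time_ge0 j r : (j <= m)%N -> 0 <= r -> 0 <= L j r.
Proof.
move=> jm r0; have [_ _ Lprop _] := SO; have [L_homo L0 _] := Lprop j jm.
by rewrite -L0; apply: L_homo => //; rewrite inE /nonneg_time /=.
Qed.

Lemma drift_integrand_le1 j r : (j <= m)%N -> 0 <= r ->
  pnorm (pscale (s j (L j r) * ind (range (c j)) (X r)) (nv j (X r))) <= 1.
Proof.
move=> jm r0; rewrite pnormZ /ind; case: asboolP => [[t _ <-]|_]; last first.
  by rewrite mulr0 normr0 mul0r ler01.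
have [-> _ _] := nv_unit j jm t; rewrite !mulr1.
have [->|j_gt0] := posnP j; first by rewrite s0_1 normr1.
have jm1 : (1 <= j <= m)%N by rewrite j_gt0.
by have [|] := s_pm1 j (L j r) jm1 (local_time_ge0 j r jm r0) => ->; rewrite ?normrN normr1.
Qed.

Lemma local_time_unvisited j t : (j <= m)%N -> 0 <= t ->
  (forall r, 0 <= r < t -> ~ range (c j) (X r)) -> L j t = 0.
Proof.
move=> jm t0 away; have [[_ _ L_cont] _ Lprop _] := SO; have [_ L0 L_int] := Lprop j jm.
apply: (within_continuous_zero (L_cont j jm) t0 L0) => u /andP[u0 ut].
rewrite L_int // LSint_eq0 // => r /andP[r0 ru].
by rewrite /ind asboolF //; apply: away; rewrite r0 (le_lt_trans ru ut).
Qed.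

(* While [X] has only met [B_i], the drift is a [dL^(i)]-integral of unit vectors. *)
Lemma pdist_shifted_le_local_time i t : (i <= m)%N -> 0 <= t ->
  (forall j r, (j <= m)%N -> j != i -> 0 <= r < t -> ~ range (c j) (X r)) ->
  pdist (X t) (padd x0 (W t)) <= L i t.
Proof.
move=> im t0 away; have [[_ _ L_cont] X_eq Lprop _] := SO.
pose drift j := LSintv (L j) (fun r => pscale (s j (L j r) * ind (range (c j)) (X r))
                                              (nv j (X r))) t.
have drift_le j : (j <= m)%N -> pnorm (drift j) <= L j t.
  move=> jm; have [L_homo L0 _] := Lprop j jm.
  apply: (LSintv_pnorm_le (L_cont j jm) L_homo L0 _ _ t0) => r /andP[r0 _].
  exact: drift_integrand_le1.
rewrite (X_eq t t0) (big_padd_only m.+1 i drift) ?ltnS //; last first.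
  move=> j; rewrite ltnS => jm ji; apply: pnorm_eq0; apply/eqP; rewrite eq_le pnorm_ge0 andbT.
  by rewrite -(local_time_unvisited j t jm t0 (fun r => away j r jm ji)) drift_le.
rewrite /pdist (_ : psub _ _ = drift i) ?drift_le //.
by rewrite /psub /padd /drift /LSintv /=; congr (_, _); ring.
Qed.

Lemma shifted_path_tracking {i r T} : (i <= m)%N ->
  (forall j z, (j <= m)%N -> j != i -> pdist z x0 < r -> ~ range (c j) z) ->
  (forall t, 0 <= t <= T -> L i t + pnorm (W t) < r) ->
  forall t, 0 <= t <= T -> pdist (X t) (padd x0 (W t)) <= L i t.
Proof.
move=> im isolated small; have [[X_cont _ _] _ _ _] := SO.
have shifted_le t : 0 <= t -> (forall u, 0 <= u < t -> pdist (X u) x0 < r) ->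
    pdist (X t) (padd x0 (W t)) <= L i t.
  by move=> t0 before; apply: pdist_shifted_le_local_time => // j u jm ji /before; apply: isolated.
have stay : forall t, 0 <= t <= T -> pdist (X t) x0 < r.
  apply: pdist_lt_continuation X_cont _ => t /andP[t0 tT] before.
  have := pdist_triangle (X t) (padd x0 (W t)) x0; rewrite pdist_paddl.
  by have := shifted_le t t0 before; have := small t (introT andP (conj t0 tT)); lra.
move=> t /andP[t0 tT]; apply: shifted_le => // u /andP[u0 ut].
by apply: stay; rewrite u0 (le_trans (ltW ut) tT).
Qed.

Lemma far_side_switched {i t y r} : (1 <= i <= m)%N -> 0 <= t -> 0 < r ->
  s i 0 = (if `[< pos_side (range (c i)) x0 >] then 1 else -1) ->
  Ddelta D m c r x0 -> Ddelta D m c r y ->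
  pos_side (range (c i)) x0 /\ neg_side (range (c i)) y \/
  neg_side (range (c i)) x0 /\ pos_side (range (c i)) y ->
  pdist (X t) y < r / 5 -> s i (L i t) != s i 0.
Proof.
move=> /andP[_ im] t0 r0 s_init Dx0 Dy sides Xty; apply/eqP => unswitched.
have [_ _ _ sign_side] := SO; have [sign_pos sign_neg] := sign_side i t im t0.
have [X_pos X_neg] := Ddelta_side r0 im Dy Xty.
have x0x0 : pdist x0 x0 < r / 5 by rewrite pdistxx divr_gt0.
have [x0_pos _] := Ddelta_side r0 im Dx0 x0x0.
case: (Ddelta_sides r0 im Dx0 Dy sides) => [[x0_in [_ y_unbdd]]|[[_ x0_unbdd] [_ y_bdd]]].
  rewrite asboolT in s_init; last exact: subset_closure.
  by have [_ y_bdd] := X_pos (sign_pos (etrans unswitched s_init)).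
have x0_not_pos : ~ pos_side (range (c i)) x0 by move/x0_pos => [_].
rewrite asboolF // in s_init.
by have [_ y_unbdd] := X_neg (sign_neg (etrans unswitched s_init)).
Qed.

End SnappingOut.

Theorem mainTheorem5 (R : realType) (m : nat)
    (D0 D : set (@pt R)) (c : nat -> R -> pt) (nv : nat -> pt -> pt)
    (lp lm : nat -> R)
    (W : R -> pt) (s : nat -> R -> R) (X : R -> pt) (L : nat -> R -> R)
    (x0 y : pt) (alpha beta gamma delta : R) (i : nat) :
  (* the domain D and the barriers B_j = range (c j) *)
  open D0 -> ebounded D0 -> D = closure D0 -> connected D ->
  simply_connected D ->
  (forall j, (j <= m)%N -> smooth_simple_closed_param (c j)) ->
  bdry D = range (c 0%N) ->
  (forall j, (1 <= j <= m)%N -> range (c j) `<=` D0) ->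
  (forall j k, (j <= m)%N -> (k <= m)%N -> j != k ->
     range (c j) `&` range (c k) = set0) ->
  (forall j, (j <= m)%N -> inward_unit_normal (c j) (nv j)) ->
  (* rates *)
  (forall j, (1 <= j <= m)%N -> 0 < lp j /\ 0 < lm j) ->
  (* the driving paths: Wiener path and chain paths *)
  W 0 = (0, 0) -> {within nonneg_time, continuous W} ->
  (forall t, s 0%N t = 1) ->
  (forall j, (1 <= j <= m)%N ->
     [/\ cadlag (s j), (forall t, 0 <= t -> s j t = 1 \/ s j t = -1) &
         s j 0 = (if `[< pos_side (range (c j)) x0 >] then 1 else -1)]) ->
  (* X is the snapping-out Brownian motion started at x0 *)
  X 0 = x0 -> snapping_out m c nv D x0 W s X L ->
  (* hypotheses of the theorem *)
  let rd := r_delta delta (kappa m c) (lambda_max m lp lm) (rho D m c) in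
  0 < alpha -> 0 < beta -> 0 < gamma -> alpha < 1 / 5 - gamma -> delta < 1 / 2 ->
  Ddelta D m c rd x0 -> Ddelta D m c rd y -> pdist x0 y <= 4 / 5 * rd ->
  (1 <= i <= m)%N ->
  (pos_side (range (c i)) x0 /\ neg_side (range (c i)) y \/
   neg_side (range (c i)) x0 /\ pos_side (range (c i)) y) ->
  (* the event A *)
  (E1 (s i) < (alpha * rd)%:E)%E -> ((beta * rd)%:E < E2 (s i))%E ->
  (forall t, 0 <= t <= rd ^+ 2 ->
     pnorm (psub (W t) (pscale (t / rd ^+ 2) (psub y x0))) <= gamma * rd) ->
  exists t, 0 <= t <= rd ^+ 2 /\ s i (L i t) != s i 0.
Proof.
move=> _ _ _ _ _ smooth _ _ disj nv_unit _ _ _ s0_1 s_props _ SO rd alpha0 _ gamma0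
  alpha_gamma delta_half Dx0 Dy x0y im x0y_sides E1_lt _ W_near.
have im' : (i <= m)%N by case/andP: im.
have [[_ _ L_cont] _ L_props _] := SO; have [_ Li0 _] := L_props i im'.
have [s_cadlag s_pm1 s_init] := s_props i im.
have [e [E1e e0 se]] := first_switch s_cadlag s_pm1 E1_lt.
have e_lt : e < alpha * rd by move: E1_lt; rewrite E1e lte_fin.
have rd0 : 0 < rd by rewrite -(pmulr_rgt0 _ alpha0) (le_lt_trans e0).
set T := rd ^+ 2; have T_gt0 : 0 < T by rewrite exprn_gt0.
have TT : 0 <= T <= T by rewrite lexx andbT ltW.
apply: contrapT => never_switches.
have unswitched t : 0 <= t <= T -> s i (L i t) = s i 0.
  by move=> tT; apply: contrapT => st; apply: never_switches; exists t; split=> //; apply/eqP.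
have L_lt := local_time_lt_switch (L_cont i im') Li0 e0 se unswitched.
have delta_lt1 : delta < 1 by lra.
have isolated := Ddelta_isolated rd0 (r_delta_lt_rho rd0 delta_lt1) im'
  (fun k km => smooth_param_closed (smooth k km)) disj Dx0 Dy x0y x0y_sides.
have W_le t : 0 <= t <= T -> pnorm (W t) <= gamma * rd + 4 / 5 * rd.
  move=> /[dup] /andP[t0 tT] /W_near /pnorm_le_shift W_le.
  apply: le_trans (W_le _) _; last by rewrite -/(pdist y x0) pdistC lerD2l.
  by rewrite divr_ge0 ?(ltW T_gt0) //= ler_pdivrMr // mul1r.
have s_pm1_all j t : (1 <= j <= m)%N -> 0 <= t -> s j t = 1 \/ s j t = -1.
  by move=> jm t0; have [_ pm1 _] := s_props j jm; exact: pm1.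
have small t : 0 <= t <= T -> L i t + pnorm (W t) < rd.
  by move=> tT; have := L_lt t tT; have := W_le t tT; nra.
have track := shifted_path_tracking SO nv_unit s0_1 s_pm1_all im' isolated small.
have WT : pdist (padd x0 (W T)) y <= gamma * rd.
  move: (W_near T TT); rewrite -/T divff ?gt_eqF //.
  by rewrite /pdist /psub /padd /pscale /= !mul1r; congr (pnorm (_, _) <= _); ring.
have XT_near : pdist (X T) y < rd / 5.
  have := pdist_triangle (X T) (padd x0 (W T)) y.
  by have := track T TT; have := L_lt T TT; nra.
have := far_side_switched SO im (proj1 (andP TT)) rd0 s_init Dx0 Dy x0y_sides XT_near.
by rewrite unswitched ?eqxx.
Qed.
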